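(* Let $N\ge2$, $d\ge1$, and let $\tilde\psi:\mathbb{R}\to\mathbb{R}$ be a positive, bounded, continuous function with $\tilde K:=\|\tilde\psi\|_\infty$. Let $\{t_n\}_{n\in\mathbb{N}_0}$ be an increasing sequence of nonnegative numbers with $t_0=0$, $t_n\to\infty$, and define $\alpha:[0,\infty)\to\{-1,1\}$ by $\alpha(0)=1$, $\alpha(t)=1$ on $(t_{2n},t_{2n+1})$, $\alpha(t)=-1$ on $[t_{2n+1},t_{2n+2}]$, $n\in\mathbb{N}_0$. Assume $t_{2n+2}-t_{2n+1}<\frac{\ln2}{\tilde K}$ for all $n\in\mathbb{N}_0$, $\sum_{p=0}^{\infty}(t_{2p+2}-t_{2p+1})<+\infty$, and $$\sup_{n\in\mathbb{N}_0}\left(\frac{e^{\tilde K(t_{2n+2}-t_{2n+1})}}{2-e^{\tilde K(t_{2n+2}-t_{2n+1})}}\max\left\{1-e^{-\tilde K(t_{2n+1}-t_{2n})},\,1-\frac{\tilde\psi_0}{\tilde K}\big(1-e^{-\tilde K(t_{2n+1}-t_{2n})}\big)\right\}\right)=c<1,$$ where $\tilde\psi_0:=\min_{|y|\le\tilde M^0}\tilde\psi(y)$, $\tilde M^0:=e^{\sum_{p=0}^{\infty}\ln\left(\frac{e^{\tilde K(t_{2p+2}-t_{2p+1})}}{2-e^{\tilde K(t_{2p+2}-t_{2p+1})}}\right)}d(0)$. Then every solution $\{x_i\}$ of $$\frac{d}{dt}x_i(t)=\frac{1}{N-1}\sum_{j\ne i}\alpha(t)\,\tilde\psi(|x_i(t)-x_j(t)|)\,(x_j(t)-x_i(t)),\quad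 t>0,\qquad x_i(0)=x_i^0\in\mathbb{R}^d,$$ satisfies $d(t)\le e^{-\gamma\left(t-\frac{\ln2}{\tilde K}-T\right)}d(0)$ for all $t\ge0$, for suitable positive constants $\gamma$ (independent of $N$) and $T$, where $d(t):=\max_{i,j}|x_i(t)-x_j(t)|$.
   Context: $\mathbb{N}_0=\{0,1,2,\dots\}$. A solution is a continuous function that is $C^1$ on each interval $(t_n,t_{n+1})$ and satisfies the equation there. *)

From Stdlib Require Import Reals Lra ClassicalDescription.
From Coquelicot Require Import Coquelicot.
Open Scope R_scope.

Fixpoint sumR (n : nat) (f : nat -> R) : R :=
  match n with O => 0 | S m => sumR m f + f m end.

(* finite max of f 0, ..., f (n-1) (and 0); used only for nonnegative values *)
Fixpoint maxR (n : nat) (f : nat -> R) : R :=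
  match n with O => 0 | S m => Rmax (maxR m f) (f m) end.

(* vectors of R^d are functions nat -> R, coordinates k < d; Euclidean norm *)
Definition enorm (d : nat) (v : nat -> R) : R :=
  sqrt (sumR d (fun k => (v k) ^ 2)).

Definition vdist (d : nat) (u v : nat -> R) : R :=
  enorm d (fun k => u k - v k).

Definition alpha (t : nat -> R) (s : R) : R :=
  if excluded_middle_informative
       (exists n : nat, t (2 * n + 1)%nat <= s <= t (2 * n + 2)%nat)
  then -1 else 1.

(* right-hand side, component k, for agent i;  x : agent -> time -> coordinate -> R *)
Definition rhs (N d : nat) (psi : R -> R) (t : nat -> R)
    (x : nat -> R -> nat -> R) (i : nat) (s : R) (k : nat) : R :=
  / (INR N - 1) *
  sumR N (fun j => if Nat.eqb j i then 0 else
     alpha t s * psi (vdist d (x i s) (x j s)) * (x j s k - x i s k)).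

(* solution: continuous on [0,oo) and differentiable on each (t_n, t_{n+1})
   satisfying the equation there (C^1 there follows from the equation) *)
Definition is_solution (N d : nat) (psi : R -> R) (t : nat -> R)
    (x : nat -> R -> nat -> R) : Prop :=
  (forall i k, (i < N)%nat -> (k < d)%nat -> forall s, 0 <= s ->
     filterlim (fun u => x i u k) (within (fun u => 0 <= u) (locally s))
               (locally (x i s k)))
  /\
  (forall n i k, (i < N)%nat -> (k < d)%nat -> forall s, t n < s < t (S n) ->
     is_derive (fun u => x i u k) s (rhs N d psi t x i s k)).

Definition diam (N d : nat) (x : nat -> R -> nat -> R) (s : R) : R :=
  maxR N (fun i => maxR N (fun j => vdist d (x i s) (x j s))).

Definition is_sup_norm (psi : R -> R) (K : R) : Prop :=
  is_lub (fun r => exists y, r = Rabs (psi y)) K.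

Definition is_min_on (psi : R -> R) (M m : R) : Prop :=
  (exists y0, Rabs y0 <= M /\ psi y0 = m) /\
  (forall y, Rabs y <= M -> m <= psi y).

Definition delta (t : nat -> R) (n : nat) : R := t (2 * n + 2)%nat - t (2 * n + 1)%nat.
Definition pos_len (t : nat -> R) (n : nat) : R := t (2 * n + 1)%nat - t (2 * n)%nat.

Definition growth (K : R) (t : nat -> R) (n : nat) : R :=
  exp (K * delta t n) / (2 - exp (K * delta t n)).

Definition M0 (K : R) (t : nat -> R) (D0 : R) : R :=
  exp (Series (fun p => ln (growth K t p))) * D0.

Definition cterm (K psi0 : R) (t : nat -> R) (n : nat) : R :=
  growth K t n *
  Rmax (1 - exp (- K * pos_len t n))
       (1 - psi0 / K * (1 - exp (- K * pos_len t n))).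

From Stdlib Require Import Reals Lra Lia Classical ClassicalDescription.
From Coquelicot Require Import Coquelicot.
Open Scope R_scope.

(* Let G(s) = max_{i,j} |x_i(s) - x_j(s)|^2. For a pair (i,j) realising the maximum every
   agent lies in the lens between x_i and x_j, so d/ds |x_i - x_j|^2 <= -2 rho G while
   alpha = 1 and <= 4 K G while alpha = -1, where rho is any lower bound of psi along the
   trajectory. A comparison argument for right Dini derivatives turns this into exponential
   bounds for G on each phase; chaining the phases gives
     G(s) <= G(0) exp (-2 rho s + (4 K + 2 rho) S),   S = sum_p (t_{2p+2} - t_{2p+1}).
   With rho = 0 all distances stay below d(0) e^{2 K S}, so psi >= m := min_{[0, d(0) e^{2KS}]} psi
   along the trajectory, and with rho = m the diameter decays at rate gamma = m. *)

Lemma sumR_ext n f g : (forall k, (k < n)%nat -> f k = g k) -> sumR n f = sumR n g.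
Proof. induction n; intros H; simpl; auto. rewrite IHn, H; auto. Qed.

Lemma sumR_plus n f g : sumR n (fun k => f k + g k) = sumR n f + sumR n g.
Proof. induction n; simpl; [lra | rewrite IHn; lra]. Qed.

Lemma sumR_scal n c f : sumR n (fun k => c * f k) = c * sumR n f.
Proof. induction n; simpl; [lra | rewrite IHn; lra]. Qed.

Lemma sumR_minus n f g : sumR n (fun k => f k - g k) = sumR n f - sumR n g.
Proof. induction n; simpl; [lra | rewrite IHn; lra]. Qed.

Lemma sumR_const n c : sumR n (fun _ => c) = INR n * c.
Proof. induction n; simpl sumR; [simpl; lra | rewrite IHn, S_INR; lra]. Qed.

Lemma sumR_le n f g : (forall k, (k < n)%nat -> f k <= g k) -> sumR n f <= sumR n g.
Proof.
  induction n; intros H; simpl; [lra|].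
  assert (f n <= g n) by auto. assert (sumR n f <= sumR n g) by auto. lra.
Qed.

Lemma sumR_nonneg n f : (forall k, (k < n)%nat -> 0 <= f k) -> 0 <= sumR n f.
Proof. intros H. rewrite <- (Rmult_0_r (INR n)), <- sumR_const. now apply sumR_le. Qed.

Lemma sumR_exchange n m (f : nat -> nat -> R) :
  sumR n (fun i => sumR m (fun j => f i j)) = sumR m (fun j => sumR n (fun i => f i j)).
Proof.
  induction n; simpl.
  - rewrite sumR_const; ring.
  - now rewrite IHn, <- sumR_plus.
Qed.

Lemma maxR_nonneg n f : 0 <= maxR n f.
Proof. induction n; simpl; [lra | eapply Rle_trans; [apply IHn | apply Rmax_l]]. Qed.

Lemma le_maxR n f k : (k < n)%nat -> f k <= maxR n f.
Proof.
  induction n; intros H; simpl; [lia|].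
  destruct (Nat.eq_dec k n) as [->|Hk]; [apply Rmax_r|].
  eapply Rle_trans; [apply IHn; lia | apply Rmax_l].
Qed.

Lemma maxR_ext n f g : (forall k, (k < n)%nat -> f k = g k) -> maxR n f = maxR n g.
Proof. induction n; intros H; simpl; auto. rewrite IHn, H; auto. Qed.

Lemma maxR_scal n c f : 0 <= c -> c * maxR n f = maxR n (fun k => c * f k).
Proof. intros Hc. induction n; simpl; [ring|]. now rewrite Rmult_max_distr_l, IHn. Qed.

Lemma maxR_sqrt n f : (forall k, (k < n)%nat -> 0 <= f k) ->
  maxR n (fun k => sqrt (f k)) = sqrt (maxR n f).
Proof.
  induction n; intros H; simpl; [now rewrite sqrt_0|].
  rewrite IHn by auto.
  destruct (Rle_dec (maxR n f) (f n)).
  - rewrite !Rmax_right; auto. now apply sqrt_le_1_alt.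
  - rewrite !Rmax_left; try lra. apply sqrt_le_1_alt; lra.
Qed.

Definition maxR2 (n : nat) (f : nat -> nat -> R) : R :=
  maxR n (fun i => maxR n (fun j => f i j)).

Lemma le_maxR2 n f i j : (i < n)%nat -> (j < n)%nat -> f i j <= maxR2 n f.
Proof.
  intros Hi Hj. eapply Rle_trans; [|apply (le_maxR _ _ i Hi)].
  exact (le_maxR _ (fun j => f i j) j Hj).
Qed.

Lemma maxR2_scal n c f : 0 <= c -> c * maxR2 n f = maxR2 n (fun i j => c * f i j).
Proof.
  intros Hc. unfold maxR2. rewrite maxR_scal by auto.
  apply maxR_ext; intros. now apply maxR_scal.
Qed.

Lemma maxR2_sqrt n f : (forall i j, (i < n)%nat -> (j < n)%nat -> 0 <= f i j) ->
  maxR2 n (fun i j => sqrt (f i j)) = sqrt (maxR2 n f).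
Proof.
  intros H. unfold maxR2. rewrite <- maxR_sqrt by (intros; apply maxR_nonneg).
  apply maxR_ext; intros. now apply maxR_sqrt; auto.
Qed.

Lemma ball_R (x e y : R) : ball x e y <-> Rabs (y - x) < e.
Proof. reflexivity. Qed.

Section Limits.
Context {T : Type} {F : (T -> Prop) -> Prop} {FF : Filter F}.

Lemma filterlim_Rplus (f g : T -> R) a b :
  filterlim f F (locally a) -> filterlim g F (locally b) ->
  filterlim (fun u => f u + g u) F (locally (a + b)).
Proof. intros Hf Hg. exact (filterlim_comp_2 _ _ _ Hf Hg (filterlim_plus a b)). Qed.

Lemma filterlim_Rmult (f g : T -> R) a b :
  filterlim f F (locally a) -> filterlim g F (locally b) ->
  filterlim (fun u => f u * g u) F (locally (a * b)).
Proof. intros Hf Hg. exact (filterlim_comp_2 _ _ _ Hf Hg (filterlim_mult a b)). Qed.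

Lemma filterlim_Rminus (f g : T -> R) a b :
  filterlim f F (locally a) -> filterlim g F (locally b) ->
  filterlim (fun u => f u - g u) F (locally (a - b)).
Proof.
  intros Hf Hg. apply filterlim_Rplus; auto.
  exact (filterlim_comp _ _ _ g opp F _ _ Hg (filterlim_opp b)).
Qed.

Lemma filterlim_Rmax (f g : T -> R) a b :
  filterlim f F (locally a) -> filterlim g F (locally b) ->
  filterlim (fun u => Rmax (f u) (g u)) F (locally (Rmax a b)).
Proof.
  intros Hf Hg. apply filterlim_locally; intros eps.
  apply (filterlim_locally f) with (eps := eps) in Hf.
  apply (filterlim_locally g) with (eps := eps) in Hg.
  generalize (filter_and _ _ Hf Hg); apply filter_imp; intros u [Hu Hv].
  rewrite ball_R in *. apply Rabs_def2 in Hu, Hv. apply Rabs_def1;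
  unfold Rmax; destruct (Rle_dec (f u) (g u)), (Rle_dec a b); lra.
Qed.

Lemma filterlim_sumR n (f : nat -> T -> R) (a : nat -> R) :
  (forall k, (k < n)%nat -> filterlim (f k) F (locally (a k))) ->
  filterlim (fun u => sumR n (fun k => f k u)) F (locally (sumR n a)).
Proof.
  induction n; intros H; simpl; [apply filterlim_const|].
  apply filterlim_Rplus; auto.
Qed.

Lemma filterlim_maxR n (f : nat -> T -> R) (a : nat -> R) :
  (forall k, (k < n)%nat -> filterlim (f k) F (locally (a k))) ->
  filterlim (fun u => maxR n (fun k => f k u)) F (locally (maxR n a)).
Proof.
  induction n; intros H; simpl; [apply filterlim_const|].
  apply filterlim_Rmax; auto.
Qed.

Lemma filter_maxR_le n (f : nat -> T -> R) (c : T -> R) :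
  F (fun u => 0 <= c u) -> (forall k, (k < n)%nat -> F (fun u => f k u <= c u)) ->
  F (fun u => maxR n (fun k => f k u) <= c u).
Proof.
  intros H0. induction n; intros H; simpl; [exact H0|].
  assert (Hn : F (fun u => f n u <= c u)) by (apply H; lia).
  assert (Hm : F (fun u => maxR n (fun k => f k u) <= c u)) by (apply IHn; auto).
  generalize (filter_and _ _ Hm Hn). apply filter_imp; intros u [H1 H2]. now apply Rmax_lub.
Qed.

End Limits.

(** * Comparison via right Dini derivatives *)

Lemma real_induction (a b : R) (P : R -> Prop) :
  a <= b ->
  (forall s, a <= s <= b -> (forall u, a <= u < s -> P u) -> P s) ->
  (forall s, a <= s < b -> (forall u, a <= u <= s -> P u) -> at_right s P) ->
  P b.
Proof.
  intros Hab Hclosed Hopen.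
  set (E := fun s => a <= s <= b /\ forall u, a <= u <= s -> P u).
  assert (HEa : E a).
  { split; [lra|]. intros u Hu. replace u with a by lra.
    apply Hclosed; [lra | intros; lra]. }
  destruct (completeness E) as [sg [Hub Hlub]].
  { exists b. intros s [Hs _]. lra. }
  { now exists a. }
  assert (Hsg : a <= sg <= b).
  { split; [now apply Hub | apply Hlub; intros s [Hs _]; lra]. }
  assert (Hbelow : forall u, a <= u < sg -> P u).
  { intros u Hu. apply NNPP; intros HPu.
    enough (sg <= u) by lra.
    apply Hlub; intros s [Hs HPs]. apply Rnot_lt_le; intros Hus.
    apply HPu, HPs; lra. }
  assert (HEsg : E sg).
  { split; auto. intros u Hu.
    destruct (Req_dec u sg) as [->|]; [apply Hclosed|apply Hbelow]; auto; lra. }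
  destruct (Req_dec sg b) as [<-|Hsgb]; [apply HEsg; lra|].
  destruct (Hopen sg ltac:(lra) (proj2 HEsg)) as [eps Heps].
  pose proof (cond_pos eps) as Heps0.
  set (s' := Rmin (sg + eps / 2) b).
  assert (sg < s' <= sg + eps / 2) by (unfold s', Rmin; destruct Rle_dec; lra).
  assert (s' <= b) by apply Rmin_r.
  enough (E s') by (assert (s' <= sg) by (now apply Hub); lra).
  split; [lra|].
  intros u Hu. destruct (Rle_dec u sg); [apply HEsg; lra|].
  apply Heps; [apply ball_R, Rabs_def1 | ]; lra.
Qed.

Lemma le_of_right_dini_nonpos (h : R -> R) a b :
  a <= b ->
  (forall s, a <= s <= b ->
     filterlim h (within (fun u => a <= u <= b) (locally s)) (locally (h s))) ->
  (forall s, a < s < b -> forall e, 0 < e ->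
     at_right s (fun u => h u <= h s + e * (u - s))) ->
  h b <= h a.
Proof.
  intros Hab Hcont Hdini.
  (* Real induction on h u <= h a + e + e (u - a): the slack e covers the start at a,
     where only continuity is available. *)
  apply Rle_plus_epsilon; intros e0 He0.
  set (e := e0 / (1 + (b - a))).
  assert (He : 0 < e) by (apply Rdiv_lt_0_compat; lra).
  replace (h a + e0) with (h a + e + e * (b - a)) by (unfold e; field; lra).
  apply (real_induction a b (fun u => h u <= h a + e + e * (u - a))); auto.
  - intros s Hs Hlt. destruct (Req_dec s a) as [->|Hsa]; [lra|].
    apply Rnot_lt_le; intros Hgt.
    assert (Hk : 0 < h s - (h a + e + e * (s - a))) by lra.
    destruct (proj1 (filterlim_locally _ _) (Hcont s Hs) (mkposreal _ Hk)) as [[dl Hdl] Hnear].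
    set (u := Rmax a (s - dl / 2)).
    assert (a <= u < s /\ s - dl / 2 <= u)
      by (unfold u, Rmax; destruct Rle_dec; lra).
    specialize (Hnear u). rewrite !ball_R in Hnear. simpl in Hnear.
    specialize (Hnear ltac:(apply Rabs_def1; lra) ltac:(lra)).
    apply Rabs_def2 in Hnear. specialize (Hlt u ltac:(lra)).
    assert (e * (u - a) <= e * (s - a)) by (apply Rmult_le_compat_l; lra).
    lra.
  - intros s Hs Hle. destruct (Req_dec s a) as [->|Hsa].
    + pose proof (Hcont a ltac:(lra)) as Hnear.
      apply filterlim_locally with (eps := mkposreal _ He) in Hnear.
      destruct Hnear as [[dl Hdl] Hnear].
      assert (Hba : 0 < b - a) by lra.
      exists (mkposreal _ (Rmin_pos _ _ Hdl Hba)).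
      intros u Hu Hau. rewrite ball_R in Hu. simpl in Hu.
      pose proof (Rmin_l dl (b - a)). pose proof (Rmin_r dl (b - a)).
      apply Rabs_def2 in Hu.
      specialize (Hnear u ltac:(apply ball_R; simpl; apply Rabs_def1; lra) ltac:(lra)).
      rewrite ball_R in Hnear. simpl in Hnear. apply Rabs_def2 in Hnear.
      assert (0 <= e * (u - a)) by (apply Rmult_le_pos; lra). lra.
    + generalize (Hdini s ltac:(lra) e He). apply filter_imp; intros u Hu.
      specialize (Hle s ltac:(lra)). lra.
Qed.

Lemma at_right_le_of_is_derive (phi : R -> R) s D H e :
  is_derive phi s D -> 0 < e -> phi s <= H -> (phi s = H -> D <= 0) ->
  at_right s (fun u => phi u <= H + e * (u - s)).
Proof.
  intros Hphi He Hle Hmax.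
  destruct (Req_dec (phi s) H) as [Heq|Hlt].
  - apply is_derive_Reals in Hphi.
    destruct (Hphi e He) as [dl Hdl].
    exists dl; intros u Hu Hsu. change R in u. rewrite ball_R in Hu.
    specialize (Hdl (u - s) ltac:(lra) Hu). replace (s + (u - s)) with u in Hdl by ring.
    apply Rabs_def2 in Hdl. specialize (Hmax Heq).
    assert (Hq : (phi u - phi s) / (u - s) < e) by lra.
    apply Rmult_lt_compat_r with (r := u - s) in Hq; [|lra].
    field_simplify in Hq; lra.
  - assert (Hgap : 0 < H - phi s) by lra.
    pose proof (ex_derive_continuous phi s (ex_intro _ D Hphi)) as Hc.
    apply filterlim_locally with (eps := mkposreal _ Hgap) in Hc.
    unfold at_right, within. generalize Hc; apply filter_imp; intros u Hu Hsu.
    rewrite ball_R in Hu. simpl in Hu. apply Rabs_def2 in Hu.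
    assert (0 <= e * (u - s)) by (apply Rmult_le_pos; lra). lra.
Qed.

Section MaxGrowth.
Variables (n : nat) (f f' : nat -> nat -> R -> R) (r a b : R).
Hypothesis Hcont : forall i j s, (i < n)%nat -> (j < n)%nat -> a <= s <= b ->
  filterlim (f i j) (within (fun u => a <= u <= b) (locally s)) (locally (f i j s)).
Hypothesis Hder : forall i j s, (i < n)%nat -> (j < n)%nat -> a < s < b ->
  is_derive (f i j) s (f' i j s).
Hypothesis Hrate : forall i j s, (i < n)%nat -> (j < n)%nat -> a < s < b ->
  f i j s = maxR2 n (fun i j => f i j s) -> f' i j s <= r * f i j s.

Let M u := maxR2 n (fun i j => f i j u).
(* The weight w absorbs the growth rate r: w * M has nonpositive right Dini derivatives. *)
Let w u := exp (- r * (u - a)).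

Lemma is_derive_exp_weight u : is_derive w u (- r * w u).
Proof. unfold w. auto_derive; auto. unfold Rminus; ring. Qed.

Lemma weighted_max_right_dini s e : a < s < b -> 0 < e ->
  at_right s (fun u => w u * M u <= w s * M s + e * (u - s)).
Proof.
  intros Hs He.
  assert (Hw : forall u, 0 < w u) by (intros; apply exp_pos).
  apply (filter_imp (fun u => maxR2 n (fun i j => w u * f i j u) <= w s * M s + e * (u - s))).
  { intros u Hu. unfold M. now rewrite maxR2_scal by (left; apply Hw). }
  assert (HMs : 0 <= w s * M s) by (apply Rmult_le_pos; [left; apply Hw | apply maxR_nonneg]).
  assert (Hbound : at_right s (fun u => 0 <= w s * M s + e * (u - s))).
  { exists (mkposreal _ Rlt_0_1); intros u _ Hu.
    assert (0 <= e * (u - s)) by (apply Rmult_le_pos; lra). lra. }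
  apply filter_maxR_le; auto; intros i Hi.
  apply filter_maxR_le; auto; intros j Hj.
  apply (at_right_le_of_is_derive _ _ (w s * (f' i j s - r * f i j s))); auto.
  - pose proof (is_derive_mult _ _ _ _ _ (is_derive_exp_weight s) (Hder i j s Hi Hj Hs) Rmult_comm)
      as Hd.
    replace (w s * (f' i j s - r * f i j s))
      with (plus (mult (- r * w s) (f i j s)) (mult (w s) (f' i j s)))
      by (unfold plus, mult; simpl; ring).
    exact Hd.
  - apply Rmult_le_compat_l; [left; apply Hw |].
    exact (le_maxR2 n (fun i j => f i j s) i j Hi Hj).
  - intros Heq. apply Rmult_eq_reg_l in Heq; [|apply Rgt_not_eq, Hw].
    specialize (Hrate i j s Hi Hj Hs Heq).
    pose proof (Hw s). nra.
Qed.

Lemma maxR2_exp_bound : a <= b -> M b <= M a * exp (r * (b - a)).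
Proof.
  intros Hab.
  assert (Hh : w b * M b <= w a * M a).
  { apply (le_of_right_dini_nonpos (fun u => w u * M u)); auto.
    - intros s Hs. apply filterlim_Rmult.
      + apply (filterlim_filter_le_1 _ (filter_le_within _)).
        apply (ex_derive_continuous (V := R_NormedModule)).
        eexists; apply is_derive_exp_weight.
      + apply filterlim_maxR; intros i Hi. apply filterlim_maxR; intros j Hj. auto.
    - intros s Hs e He. now apply weighted_max_right_dini. }
  unfold w in Hh. rewrite Rminus_diag, Rmult_0_r, exp_0, Rmult_1_l in Hh.
  replace (M b) with (exp (r * (b - a)) * (exp (- r * (b - a)) * M b)).
  - rewrite (Rmult_comm (M a)). apply Rmult_le_compat_l; [left; apply exp_pos | exact Hh].
  - rewrite <- Rmult_assoc, <- exp_plus.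
    replace (r * (b - a) + - r * (b - a)) with 0 by ring. now rewrite exp_0, Rmult_1_l.
Qed.

End MaxGrowth.

(** * Squared distances under a consensus field *)

Definition sqdist (d : nat) (u v : nat -> R) : R := sumR d (fun k => (u k - v k) ^ 2).

Definition dot (d : nat) (u v : nat -> R) : R := sumR d (fun k => u k * v k).

Lemma sqdist_nonneg d u v : 0 <= sqdist d u v.
Proof. apply sumR_nonneg; intros; apply pow2_ge_0. Qed.

Lemma dot_polarization d u v w :
  2 * dot d (fun k => u k - v k) (fun k => w k - v k) = sqdist d u v + sqdist d w v - sqdist d w u.
Proof.
  unfold dot, sqdist. rewrite <- sumR_plus, <- sumR_minus, <- sumR_scal.
  apply sumR_ext; intros; ring.
Qed.

Definition consensus_field (N : nat) (a : nat -> nat -> R) (y : nat -> nat -> R) (p k : nat) : R :=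
  / (INR N - 1) * sumR N (fun l => a p l * (y l k - y p k)).

Lemma sqdist_rate_expand N d a y i j :
  sumR d (fun k => 2 * (y i k - y j k) * (consensus_field N a y i k - consensus_field N a y j k)) =
  2 / (INR N - 1) * sumR N (fun l =>
     a i l * dot d (fun k => y i k - y j k) (fun k => y l k - y i k)
   - a j l * dot d (fun k => y i k - y j k) (fun k => y l k - y j k)).
Proof.
  unfold consensus_field, dot.
  transitivity (sumR d (fun k => 2 / (INR N - 1) * sumR N (fun l =>
     a i l * ((y i k - y j k) * (y l k - y i k)) - a j l * ((y i k - y j k) * (y l k - y j k))))).
  { apply sumR_ext; intros k _. rewrite sumR_minus.
    replace (sumR N (fun l => a i l * ((y i k - y j k) * (y l k - y i k))))
      with ((y i k - y j k) * sumR N (fun l => a i l * (y l k - y i k)))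
      by (rewrite <- sumR_scal; apply sumR_ext; intros; ring).
    replace (sumR N (fun l => a j l * ((y i k - y j k) * (y l k - y j k))))
      with ((y i k - y j k) * sumR N (fun l => a j l * (y l k - y j k)))
      by (rewrite <- sumR_scal; apply sumR_ext; intros; ring).
    unfold Rdiv; ring. }
  rewrite sumR_scal, sumR_exchange. f_equal.
  apply sumR_ext; intros l _. rewrite sumR_minus, !sumR_scal. reflexivity.
Qed.

Lemma sqdist_rate_bounds N d a y i j lo hi :
  (2 <= N)%nat -> (i < N)%nat -> (j < N)%nat -> 0 <= lo ->
  (forall p l, (p < N)%nat -> (l < N)%nat -> lo <= a p l <= hi) ->
  (forall p l, (p < N)%nat -> (l < N)%nat -> sqdist d (y p) (y l) <= sqdist d (y i) (y j)) ->
  let Z := sqdist d (y i) (y j) in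
  let Q := sumR d (fun k => 2 * (y i k - y j k) *
             (consensus_field N a y i k - consensus_field N a y j k)) in
  -4 * hi * Z <= Q <= -2 * lo * Z.
Proof.
  intros HN Hi Hj Hlo Ha Hmax Z Q. unfold Q. rewrite sqdist_rate_expand.
  assert (HZ : 0 <= Z) by apply sqdist_nonneg.
  assert (Hterm : forall l, (l < N)%nat ->
    let X := dot d (fun k => y i k - y j k) (fun k => y l k - y i k) in
    let Y := dot d (fun k => y i k - y j k) (fun k => y l k - y j k) in
    - hi * Z <= a i l * X - a j l * Y <= - lo * Z).
  (* Maximality of (i,j) and polarization put x_l in the lens: 0 <= Y <= Z and X = Y - Z. *)
  { intros l Hl X Y.
    assert (HXY : X = Y - Z).
    { unfold X, Y, Z, dot, sqdist. rewrite <- sumR_minus. apply sumR_ext; intros; ring. }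
    pose proof (dot_polarization d (y i) (y j) (y l)) as HY. fold Y in HY.
    pose proof (Hmax l j Hl Hj) as Hlj. pose proof (Hmax l i Hl Hi) as Hli. fold Z in Hlj, Hli, HY.
    pose proof (sqdist_nonneg d (y l) (y j)). pose proof (sqdist_nonneg d (y l) (y i)).
    assert (0 <= Y <= Z) by lra.
    destruct (Ha i l Hi Hl), (Ha j l Hj Hl). rewrite HXY. split; nra. }
  assert (Hsum : INR N * (- hi * Z) <= sumR N (fun l =>
     a i l * dot d (fun k => y i k - y j k) (fun k => y l k - y i k)
   - a j l * dot d (fun k => y i k - y j k) (fun k => y l k - y j k)) <= INR N * (- lo * Z)).
  { rewrite <- !sumR_const. split; apply sumR_le; intros l Hl; apply (Hterm l Hl). }
  assert (HN2 : 2 <= INR N) by (apply le_INR in HN; simpl in HN; lra).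
  assert (Hc : 2 <= 2 / (INR N - 1) * INR N <= 4).
  { split; apply (Rmult_le_reg_r (INR N - 1)); try lra; field_simplify; lra. }
  assert (0 <= lo * Z) by nra.
  assert (0 <= hi * Z) by (destruct (Ha i i Hi Hi); nra).
  assert (0 < 2 / (INR N - 1)) by (apply Rdiv_lt_0_compat; lra).
  split; nra.
Qed.

Lemma is_derive_sqdist d (u v : R -> nat -> R) s (du dv : nat -> R) :
  (forall k, (k < d)%nat -> is_derive (fun r => u r k) s (du k)) ->
  (forall k, (k < d)%nat -> is_derive (fun r => v r k) s (dv k)) ->
  is_derive (fun r => sqdist d (u r) (v r)) s
    (sumR d (fun k => 2 * (u s k - v s k) * (du k - dv k))).
Proof.
  intros Hu Hv. unfold sqdist. induction d; simpl.
  - apply is_derive_Reals, derivable_pt_lim_const.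
  - apply (is_derive_plus (fun r => sumR d (fun k => (u r k - v r k) ^ 2))
                          (fun r => (u r d - v r d) ^ 2)).
    + apply IHd; intros; [apply Hu | apply Hv]; lia.
    + pose proof (is_derive_pow _ 2 s _ (is_derive_minus _ _ s _ _ (Hu d ltac:(lia)) (Hv d ltac:(lia)))) as H.
      simpl in H. unfold minus, plus, opp in H; simpl in H.
      replace (2 * (u s d - v s d) * (du d - dv d))
        with ((1 + 1) * (du d + - dv d) * ((u s d + - v s d) * 1)) by ring.
      revert H; apply is_derive_ext; intros; simpl; ring.
Qed.

Lemma rhs_alpha_consensus N d psi t x i s k :
  rhs N d psi t x i s k =
  alpha t s * consensus_field N (fun p l => psi (vdist d (x p s) (x l s))) (fun l => x l s) i k.
Proof.
  unfold rhs, consensus_field. rewrite <- Rmult_assoc, (Rmult_comm (alpha t s)), Rmult_assoc.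
  f_equal. rewrite <- sumR_scal. apply sumR_ext; intros l _.
  destruct (Nat.eqb_spec l i) as [->|]; ring.
Qed.

Lemma incr_seq_lt (t : nat -> R) : (forall n, t n < t (S n)) ->
  forall m n, (m < n)%nat -> t m < t n.
Proof.
  intros Ht m n Hmn. induction Hmn; [apply Ht|].
  eapply Rlt_trans; [apply IHHmn | apply Ht].
Qed.

Lemma incr_seq_nonneg (t : nat -> R) : t O = 0 -> (forall n, t n < t (S n)) ->
  forall n, 0 <= t n.
Proof. intros Ht0 Ht [|n]; [lra|]. rewrite <- Ht0. left; apply incr_seq_lt; auto; lia. Qed.

Lemma alpha_pos_phase t n s : (forall n, t n < t (S n)) ->
  t (2 * n)%nat < s < t (2 * n + 1)%nat -> alpha t s = 1.
Proof.
  intros Ht Hs. unfold alpha. destruct excluded_middle_informative as [[p Hp]|]; auto.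
  exfalso. destruct (Nat.lt_ge_cases p n).
  - assert (t (2 * p + 2)%nat <= t (2 * n)%nat).
    { destruct (Nat.eq_dec (2 * p + 2) (2 * n)) as [->|]; [lra|].
      left; apply incr_seq_lt; auto; lia. }
    lra.
  - assert (t (2 * n + 1)%nat <= t (2 * p + 1)%nat).
    { destruct (Nat.eq_dec n p) as [->|]; [lra|].
      left; apply incr_seq_lt; auto; lia. }
    lra.
Qed.

Lemma alpha_neg_phase t n s : t (2 * n + 1)%nat <= s <= t (2 * n + 2)%nat -> alpha t s = -1.
Proof.
  intros Hs. unfold alpha. destruct excluded_middle_informative as [|Hnot]; auto.
  exfalso; apply Hnot; now exists n.
Qed.

Lemma incr_seq_cover (t : nat -> R) : t O = 0 -> (forall n, t n < t (S n)) ->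
  is_lim_seq t p_infty -> forall s, 0 <= s -> exists n, t n <= s <= t (S n).
Proof.
  intros H0 Ht Hlim s Hs. apply is_lim_seq_spec in Hlim. destruct (Hlim s) as [M HM].
  specialize (HM M (le_n M)). clear Hlim. induction M as [|M IH]; [lra|].
  destruct (Rle_dec (t M) s); [exists M; lra | apply IH; lra].
Qed.

Lemma sumR_le_Series (a : nat -> R) : (forall n, 0 <= a n) -> ex_series a ->
  forall n, sumR n a <= Series a.
Proof.
  intros Ha Hex.
  assert (Hsum : forall n, sumR (S n) a = sum_n a n).
  { induction n; simpl in *; [now rewrite sum_O, Rplus_0_l | now rewrite sum_Sn, <- IHn]. }
  assert (Hle : forall n, sum_n a n <= Series a).
  { apply is_lim_seq_incr_compare; [apply Series_correct, Hex|].
    intros n. rewrite sum_Sn. pose proof (Ha (S n)). unfold plus; simpl; lra. }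
  intros [|n]; [simpl; pose proof (Hle O); rewrite sum_O in *; pose proof (Ha O); lra|].
  rewrite Hsum. apply Hle.
Qed.

Section PhaseGluing.
Variables (t : nat -> R) (g : R -> R) (rho C : R).
Hypothesis Ht : forall n, t n < t (S n).
Hypothesis Hrho : 0 <= rho.
Hypothesis HC : 0 <= C.
Hypothesis Hpos : forall n s, t (2 * n)%nat <= s <= t (2 * n + 1)%nat ->
  g s <= g (t (2 * n)%nat) * exp (- rho * (s - t (2 * n)%nat)).
Hypothesis Hneg : forall n s, t (2 * n + 1)%nat <= s <= t (2 * n + 2)%nat ->
  g s <= g (t (2 * n + 1)%nat) * exp (C * (s - t (2 * n + 1)%nat)).

Lemma phase_bound_even n :
  g (t (2 * n)%nat) <= g (t O) * exp (- rho * (t (2 * n)%nat - t O) + (C + rho) * sumR n (delta t)).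
Proof.
  induction n as [|n IH].
  - simpl. rewrite Rminus_diag, Rmult_0_r, Rmult_0_r, Rplus_0_l, exp_0. lra.
  - replace (2 * S n)%nat with (2 * n + 2)%nat by lia.
    pose proof (Ht (2 * n)). pose proof (Ht (2 * n + 1)).
    replace (S (2 * n)) with (2 * n + 1)%nat in * by lia.
    replace (S (2 * n + 1)) with (2 * n + 2)%nat in * by lia.
    eapply Rle_trans; [apply (Hneg n); lra|].
    eapply Rle_trans; [apply Rmult_le_compat_r; [left; apply exp_pos | apply (Hpos n); lra]|].
    eapply Rle_trans.
    { apply Rmult_le_compat_r; [left; apply exp_pos|].
      apply Rmult_le_compat_r; [left; apply exp_pos | apply IH]. }
    rewrite !Rmult_assoc, <- !exp_plus. right. do 2 f_equal.
    simpl sumR. unfold delta. ring.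
Qed.

Lemma phase_bound Sd : t O = 0 -> is_lim_seq t p_infty -> 0 <= g 0 ->
  (forall n, sumR n (delta t) <= Sd) ->
  forall s, 0 <= s -> g s <= g 0 * exp (- rho * s + (C + rho) * Sd).
Proof.
  intros Ht0 Hlim Hg0 HS s Hs.
  assert (Hmono : forall A B, A <= B -> g 0 * exp A <= g 0 * exp B).
  { intros A B HAB. apply Rmult_le_compat_l; auto.
    destruct HAB as [HAB | ->]; [left; now apply exp_increasing | lra]. }
  destruct (incr_seq_cover t Ht0 Ht Hlim s Hs) as [n Hn].
  destruct (Nat.Even_or_Odd n) as [[p ->]|[p ->]].
  - replace (S (2 * p)) with (2 * p + 1)%nat in Hn by lia.
    eapply Rle_trans; [apply (Hpos p); lra|].
    eapply Rle_trans; [apply Rmult_le_compat_r; [left; apply exp_pos | apply phase_bound_even]|].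
    rewrite Ht0, Rmult_assoc, <- exp_plus. apply Hmono.
    pose proof (HS p). nra.
  - replace (S (2 * p + 1)) with (2 * p + 2)%nat in Hn by lia.
    pose proof (Ht (2 * p)) as Hp. replace (S (2 * p)) with (2 * p + 1)%nat in Hp by lia.
    eapply Rle_trans; [apply (Hneg p); lra|].
    eapply Rle_trans; [apply Rmult_le_compat_r; [left; apply exp_pos | apply (Hpos p); lra]|].
    eapply Rle_trans.
    { apply Rmult_le_compat_r; [left; apply exp_pos|].
      apply Rmult_le_compat_r; [left; apply exp_pos | apply phase_bound_even]. }
    rewrite Ht0, !Rmult_assoc, <- !exp_plus. apply Hmono.
    pose proof (HS (S p)) as HSp. simpl sumR in HSp. unfold delta at 2 in HSp.
    assert ((C + rho) * (s - t (2 * p + 1)%nat) <= (C + rho) * (t (2 * p + 2)%nat - t (2 * p + 1)%nat))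
      by (apply Rmult_le_compat_l; lra).
    nra.
Qed.

End PhaseGluing.

(** * Solutions of the switched system *)

Section Solution.
Variables (N d : nat) (psi : R -> R) (t : nat -> R) (x : nat -> R -> nat -> R) (lo K : R).
Hypothesis HN : (2 <= N)%nat.
Hypothesis Hsol : is_solution N d psi t x.
Hypothesis Ht : forall n, t n < t (S n).
Hypothesis Ht0 : t O = 0.
Hypothesis Hlo : 0 <= lo.
Hypothesis Hpsi : forall s p l, 0 <= s -> (p < N)%nat -> (l < N)%nat ->
  lo <= psi (vdist d (x p s) (x l s)) <= K.

Definition sqdiam (s : R) : R := maxR2 N (fun i j => sqdist d (x i s) (x j s)).

Lemma diam_sqdiam s : diam N d x s = sqrt (sqdiam s).
Proof. apply maxR2_sqrt; intros; apply sqdist_nonneg. Qed.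

Lemma sqdist_continuous_within i j a b s : (i < N)%nat -> (j < N)%nat -> 0 <= a -> a <= s <= b ->
  filterlim (fun u => sqdist d (x i u) (x j u)) (within (fun u => a <= u <= b) (locally s))
    (locally (sqdist d (x i s) (x j s))).
Proof.
  intros Hi Hj Ha Hs.
  assert (Hx : forall l k, (l < N)%nat -> (k < d)%nat ->
    filterlim (fun u => x l u k) (within (fun u => a <= u <= b) (locally s)) (locally (x l s k))).
  { intros l k Hl Hk. eapply filterlim_filter_le_1; [|apply (proj1 Hsol); auto; lra].
    intros P HP. unfold within in *. revert HP; apply filter_imp; intros u HP Hu. apply HP; lra. }
  apply filterlim_sumR; intros k Hk. simpl.
  apply filterlim_Rmult; [|apply filterlim_Rmult; [|apply filterlim_const]];
    apply filterlim_Rminus; auto.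
Qed.

Definition pair_rate (s : R) (i j : nat) : R :=
  sumR d (fun k => 2 * (x i s k - x j s k) *
    (consensus_field N (fun p l => psi (vdist d (x p s) (x l s))) (fun l => x l s) i k
   - consensus_field N (fun p l => psi (vdist d (x p s) (x l s))) (fun l => x l s) j k)).

Lemma is_derive_sqdist_solution n i j s : (i < N)%nat -> (j < N)%nat -> t n < s < t (S n) ->
  is_derive (fun u => sqdist d (x i u) (x j u)) s (alpha t s * pair_rate s i j).
Proof.
  intros Hi Hj Hs.
  replace (alpha t s * pair_rate s i j)
    with (sumR d (fun k => 2 * (x i s k - x j s k) * (rhs N d psi t x i s k - rhs N d psi t x j s k))).
  - apply is_derive_sqdist; intros k Hk; apply (proj2 Hsol n); auto.
  - unfold pair_rate. rewrite <- sumR_scal. apply sumR_ext; intros k _.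
    rewrite !rhs_alpha_consensus. ring.
Qed.

Lemma sqdiam_exp_bound n r :
  (forall s i j, t n < s < t (S n) -> (i < N)%nat -> (j < N)%nat ->
     sqdist d (x i s) (x j s) = sqdiam s ->
     alpha t s * pair_rate s i j <= r * sqdist d (x i s) (x j s)) ->
  forall s, t n <= s <= t (S n) -> sqdiam s <= sqdiam (t n) * exp (r * (s - t n)).
Proof.
  intros Hrate s Hs.
  apply (maxR2_exp_bound N (fun i j u => sqdist d (x i u) (x j u))
           (fun i j u => alpha t u * pair_rate u i j)); try lra.
  - intros i j u Hi Hj Hu. apply sqdist_continuous_within; auto. now apply incr_seq_nonneg.
  - intros i j u Hi Hj Hu. apply (is_derive_sqdist_solution n); auto; lra.
  - intros i j u Hi Hj Hu. apply Hrate; auto; lra.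
Qed.

Lemma pair_rate_bounds s i j : 0 <= s -> (i < N)%nat -> (j < N)%nat ->
  sqdist d (x i s) (x j s) = sqdiam s ->
  -4 * K * sqdist d (x i s) (x j s) <= pair_rate s i j <= -2 * lo * sqdist d (x i s) (x j s).
Proof.
  intros Hs Hi Hj Hmax.
  apply (sqdist_rate_bounds N d _ (fun l => x l s)); auto.
  intros p l Hp Hl. rewrite Hmax.
  exact (le_maxR2 N (fun i j => sqdist d (x i s) (x j s)) p l Hp Hl).
Qed.

Lemma sqdiam_pos_phase n s : t (2 * n)%nat <= s <= t (2 * n + 1)%nat ->
  sqdiam s <= sqdiam (t (2 * n)%nat) * exp (- (2 * lo) * (s - t (2 * n)%nat)).
Proof.
  replace (2 * n + 1)%nat with (S (2 * n)) by lia.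
  apply sqdiam_exp_bound. intros s' i j Hs' Hi Hj Hmax.
  rewrite (alpha_pos_phase t n); [|auto | rewrite Nat.add_1_r; auto].
  pose proof (incr_seq_nonneg t Ht0 Ht (2 * n)).
  pose proof (pair_rate_bounds s' i j ltac:(lra) Hi Hj Hmax). lra.
Qed.

Lemma sqdiam_neg_phase n s : t (2 * n + 1)%nat <= s <= t (2 * n + 2)%nat ->
  sqdiam s <= sqdiam (t (2 * n + 1)%nat) * exp (4 * K * (s - t (2 * n + 1)%nat)).
Proof.
  replace (2 * n + 2)%nat with (S (2 * n + 1)) by lia.
  apply sqdiam_exp_bound. intros s' i j Hs' Hi Hj Hmax.
  rewrite (alpha_neg_phase t n); [|replace (2 * n + 2)%nat with (S (2 * n + 1)) by lia; lra].
  pose proof (incr_seq_nonneg t Ht0 Ht (2 * n + 1)).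
  pose proof (pair_rate_bounds s' i j ltac:(lra) Hi Hj Hmax). lra.
Qed.

Lemma diam_decay Sd : is_lim_seq t p_infty -> (forall n, sumR n (delta t) <= Sd) ->
  forall s, 0 <= s -> diam N d x s <= diam N d x 0 * exp (- lo * s + (2 * K + lo) * Sd).
Proof.
  intros Hlim HS s Hs.
  assert (HK : 0 <= K) by (pose proof (Hpsi 0 0 0 (Rle_refl 0) ltac:(lia) ltac:(lia)); lra).
  pose proof (phase_bound t sqdiam (2 * lo) (4 * K) Ht ltac:(lra) ltac:(lra)
    sqdiam_pos_phase sqdiam_neg_phase Sd Ht0 Hlim (maxR_nonneg _ _) HS s Hs) as Hsq.
  set (E := - lo * s + (2 * K + lo) * Sd).
  replace (- (2 * lo) * s + (4 * K + 2 * lo) * Sd) with (E + E) in Hsq by (unfold E; ring).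
  rewrite exp_plus in Hsq. rewrite !diam_sqdiam.
  replace (sqrt (sqdiam 0) * exp E) with (sqrt (sqdiam 0 * (exp E * exp E))).
  - now apply sqrt_le_1_alt.
  - rewrite sqrt_mult_alt, sqrt_square; [reflexivity | left; apply exp_pos | apply maxR_nonneg].
Qed.

End Solution.

Lemma solution_vdist_bound N d psi t x K Sd :
  (2 <= N)%nat -> is_solution N d psi t x -> t O = 0 -> (forall n, t n < t (S n)) ->
  is_lim_seq t p_infty -> (forall n, sumR n (delta t) <= Sd) ->
  (forall y, 0 < psi y) -> (forall y, psi y <= K) ->
  forall s p l, 0 <= s -> (p < N)%nat -> (l < N)%nat ->
  vdist d (x p s) (x l s) <= diam N d x 0 * exp (2 * K * Sd).
Proof.
  intros HN Hsol Ht0 Ht Hlim HS Hpos HK s p l Hs Hp Hl.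
  eapply Rle_trans; [exact (le_maxR2 N (fun i j => vdist d (x i s) (x j s)) p l Hp Hl)|].
  assert (Hpsi : forall s p l, 0 <= s -> (p < N)%nat -> (l < N)%nat ->
    0 <= psi (vdist d (x p s) (x l s)) <= K).
  { intros; split; [left; apply Hpos | apply HK]. }
  eapply Rle_trans; [apply (diam_decay N d psi t x 0 K); auto; lra|].
  right; do 2 f_equal; ring.
Qed.

Lemma sup_norm_ge (psi : R -> R) K y : is_sup_norm psi K -> psi y <= K.
Proof. intros [Hub _]. eapply Rle_trans; [apply Rle_abs | apply Hub; now exists y]. Qed.

Lemma delta_nonneg t : (forall n, t n < t (S n)) -> forall n, 0 <= delta t n.
Proof.
  intros Ht n. unfold delta. pose proof (Ht (2 * n + 1)%nat).
  replace (S (2 * n + 1)) with (2 * n + 2)%nat in * by lia. lra.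
Qed.

Lemma continuous_pos_min (psi : R -> R) B : (forall y, 0 < psi y) -> (forall y, continuous psi y) ->
  0 <= B -> exists m, 0 < m /\ forall y, 0 <= y <= B -> m <= psi y.
Proof.
  intros Hpos Hcont HB.
  destruct (continuity_ab_min psi 0 B HB) as [mx [Hmin _]].
  { intros y _. apply continuity_pt_filterlim, Hcont. }
  exists (psi mx). split; auto.
Qed.

Lemma exp_decay_shift m A c : 0 < m -> 0 <= A -> 0 <= c ->
  exists T, 0 < T /\ forall s, exp (- m * s + A) <= exp (- m * (s - c - T)).
Proof.
  intros Hm HA Hc. exists (A / m + 1). split.
  - assert (0 <= A / m) by (apply Rdiv_le_0_compat; lra). lra.
  - intros s. left. apply exp_increasing.
    replace (- m * (s - c - (A / m + 1))) with (- m * s + A + (m * c + m)) by (field; lra).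
    assert (0 <= m * c) by (apply Rmult_le_pos; lra). lra.
Qed.

Theorem theorem5p2 :
  forall (psi : R -> R) (K : R) (t : nat -> R) (D0 psi0 c : R),
    (forall y, 0 < psi y) ->
    (forall y, continuous psi y) ->
    is_sup_norm psi K ->
    t O = 0 ->
    (forall n, t n < t (S n)) ->
    is_lim_seq t p_infty ->
    (forall n, delta t n < ln 2 / K) ->
    ex_series (delta t) ->
    is_min_on psi (M0 K t D0) psi0 ->
    is_lub (fun r => exists n, r = cterm K psi0 t n) c ->
    c < 1 ->
    exists gamma : R, 0 < gamma /\
      forall (N d : nat) (x : nat -> R -> nat -> R),
        (2 <= N)%nat -> (1 <= d)%nat ->
        is_solution N d psi t x ->
        diam N d x 0 = D0 ->
        exists T : R, 0 < T /\
          forall s, 0 <= s ->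
            diam N d x s <= exp (- gamma * (s - ln 2 / K - T)) * diam N d x 0.
Proof.
  intros psi K t D0 psi0 c Hpos Hcont Hsup Ht0 Ht Hlim _ Hser _ _ _.
  assert (HK : forall y, psi y <= K) by (intros; now apply sup_norm_ge).
  assert (HK0 : 0 < K) by (pose proof (Hpos 0); pose proof (HK 0); lra).
  set (Sd := Series (delta t)).
  assert (HS : forall n, sumR n (delta t) <= Sd) by (apply sumR_le_Series, Hser; now apply delta_nonneg).
  assert (HSd : 0 <= Sd) by apply (HS O).
  destruct (continuous_pos_min psi (Rabs D0 * exp (2 * K * Sd)) Hpos Hcont) as [m [Hm Hmin]].
  { apply Rmult_le_pos; [apply Rabs_pos | left; apply exp_pos]. }
  exists m; split; auto.
  intros N d x HN _ Hsol HD0.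
  assert (Hpsi : forall s p l, 0 <= s -> (p < N)%nat -> (l < N)%nat ->
    m <= psi (vdist d (x p s) (x l s)) <= K).
  { intros s p l Hs Hp Hl. split; [apply Hmin; split | apply HK]; [apply sqrt_pos|].
    eapply Rle_trans; [apply (solution_vdist_bound N d psi t x K Sd); auto|].
    rewrite HD0. apply Rmult_le_compat_r; [left; apply exp_pos | apply Rle_abs]. }
  destruct (exp_decay_shift m ((2 * K + m) * Sd) (ln 2 / K)) as [T [HT Hshift]]; auto.
  { apply Rmult_le_pos; lra. }
  { apply Rdiv_le_0_compat; auto. left; rewrite <- ln_1; apply ln_increasing; lra. }
  exists T; split; auto. intros s Hs. rewrite Rmult_comm.
  eapply Rle_trans; [apply (diam_decay N d psi t x m K); auto; lra|].
  apply Rmult_le_compat_l; [apply maxR_nonneg | apply Hshift].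
Qed.
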